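(* Let $G=(V,E)$ be a directed graph with non-negative integer edge weights $w$ (zero weights allowed), $x\in V$ a source and $h\ge1$. Run the following synchronous procedure (Algorithm 3): each vertex $v$ keeps a pair $(d^*(v),l^*(v))$, initialized to $(0,0)$ at $x$ and $(\infty,\infty)$ elsewhere; in each round $r=0,1,2,\dots$, every vertex $v$ with $\lceil d^*(v)\sqrt{h}+l^*(v)\rceil=r$ sends $(d^*(v),l^*(v))$ to all its neighbors; a vertex $v$ receiving $(d^-,l^-)$ from $y$ computes $d=d^-+w(y,v)$, $l=l^-+1$ and replaces its pair by $(d,l)$ if $d<d^*(v)$, or $d=d^*(v)$ and $l<l^*(v)$. Let $\pi$ be a path with the minimum number of hops among all $h$-hop shortest paths from $x$ to $v$, and let $\pi$ have $l^*$ hops and weight $d^*$. If $v$ receives the message that gives it the pair $(d^*,l^* )$ in round $r$, then $r<\lceil d^*\sqrt{h}+l^*\rceil$.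
   Context: An $h$-hop shortest path from $x$ to $v$ is an $x$–$v$ path of minimum weight among all $x$–$v$ paths with at most $h$ edges. Messages sent in a round are received by the end of that round (synchronous message passing). *)

From HB Require Import structures.
From mathcomp Require Import all_boot all_order all_algebra all_field.
Set Implicit Arguments. Unset Strict Implicit. Unset Printing Implicit Defensive.
Import Order.TTheory GRing.Theory Num.Theory.

Section Alg3.
Variables (V : finType) (e : rel V) (w : V -> V -> nat) (x : V) (h : nat).

Definition key (d l : nat) : int :=
  Num.ceil ((d%:R : algC) * sqrtC (h%:R) + l%:R)%R.

(* strict lexicographic comparison of (d,l) with the current pair;
   None is (infinity, infinity) *)
Definition improves (p : nat * nat) (cur : option (nat * nat)) : bool :=
  match cur with
  | None => true
  | Some (dc, lc) => (p.1 < dc) || ((p.1 == dc) && (p.2 < lc))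
  end.

Definition process (cur : option (nat * nat)) (p : nat * nat) :=
  if improves p cur then Some p else cur.

Definition init (v : V) : option (nat * nat) :=
  if v == x then Some (0, 0) else None.

Definition sends (s : V -> option (nat * nat)) (r : nat) (y : V) : bool :=
  if s y is Some (d, l) then key d l == Posz r else false.

Definition received (s : V -> option (nat * nat)) (r : nat) (v : V)
  : seq (nat * nat) :=
  pmap (fun y => if e y v && sends s r y then
                   if s y is Some (d, l) then Some (d + w y v, l.+1) else None
                 else None) (enum V).

(* state s r = the pairs at the start of round r (= end of round r-1) *)
Fixpoint state (r : nat) : V -> option (nat * nat) :=
  match r with
  | 0 => init
  | r'.+1 => let s := state r' in
             fun v => foldl process (s v) (received s r' v)
  end.

Definition pweight (p : seq V) : nat :=
  \sum_(ij <- zip (x :: p) p) w ij.1 ij.2.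

(* simple directed path from x to v, with vertex sequence x :: p, hops = size p *)
Definition is_path (v : V) (p : seq V) : bool :=
  path e x p && (last x p == v) && uniq (x :: p).

Definition h_hop_shortest (v : V) (p : seq V) : Prop :=
  [/\ is_path v p, size p <= h &
      forall q, is_path v q -> size q <= h -> pweight p <= pweight q].

Definition min_hop_h_shortest (v : V) (p : seq V) : Prop :=
  h_hop_shortest v p /\ forall q, h_hop_shortest v q -> size p <= size q.

End Alg3.

(* The pair (d', l') reaches v in a message from some in-neighbour y, which sent
   its own pair (d, l) in round r = ceil(d sqrt h + l); then d' = d + w(y,v) and
   l' = l + 1, and the round key is nondecreasing in d and grows by exactly one
   with l, so ceil(d' sqrt h + l') >= r + 1. *)
From HB Require Import structures.
From mathcomp Require Import all_boot all_order all_algebra all_field.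
Import Order.TTheory GRing.Theory Num.Theory.

Section RoundKey.
Variable h : nat.
Local Open Scope ring_scope.

Lemma key_real (d l : nat) :
  (d%:R : algC) * sqrtC h%:R + l%:R \is Num.real.
Proof. by apply: ger0_real; rewrite addr_ge0 // mulr_ge0 // sqrtC_ge0 ler0n. Qed.

Lemma keyS (d l : nat) : key h d l.+1 = key h d l + 1.
Proof. by rewrite /key -[l.+1]addn1 natrD addrA real_ceilDrz ?ceil1 ?key_real. Qed.

Lemma key_leq_dist (d d' l : nat) : (d <= d')%N -> key h d l <= key h d' l.
Proof.
move=> le_dd'; apply: le_ceil; rewrite lerD2r ler_wpM2r ?ler_nat //.
by rewrite sqrtC_ge0 ler0n.
Qed.

End RoundKey.

Section Received.
Variables (V : finType) (e : rel V) (w : V -> V -> nat) (h : nat).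

Lemma receivedP (s : V -> option (nat * nat)) (r : nat) (v : V) (p : nat * nat) :
  p \in received e w h s r v ->
  exists y d l, [/\ e y v, s y = Some (d, l), key h d l = Posz r
                  & p = (d + w y v, l.+1)].
Proof.
rewrite /received mem_pmap => /mapP [y _].
case: (e y v && sends h s r y) /andP => [[eyv]|//].
rewrite /sends; case sy: (s y) => [[d l]|//] /eqP key_dl [->].
by exists y, d, l.
Qed.

Lemma received_key_gt (s : V -> option (nat * nat)) (r : nat) (v : V) (d l : nat) :
  (d, l) \in received e w h s r v -> (Posz r < key h d l)%R.
Proof.
move=> /receivedP [y [d' [l' [_ _ key_dl' [-> ->]]]]].
by rewrite keyS -key_dl' ltzD1 key_leq_dist ?leq_addr.
Qed.

End Received.

Theorem lemma3p1 (V : finType) (e : rel V) (w : V -> V -> nat) (x : V) (h : nat)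
  (hh : 1 <= h) (v : V) (pi : seq V) (r : nat) :
  min_hop_h_shortest e w x h v pi ->
  let dstar := pweight w x pi in
  let lstar := size pi in
  (* v receives in round r a message yielding (dstar, lstar), and this
     message gives v that pair: it did not hold it before round r and holds
     it at the end of round r *)
  (dstar, lstar) \in received e w h (state e w x h r) r v ->
  state e w x h r v != Some (dstar, lstar) ->
  state e w x h r.+1 v = Some (dstar, lstar) ->
  (Posz r < key h dstar lstar)%R.
Proof.
move=> _ dstar lstar received_pi _ _.
exact: received_key_gt received_pi.
Qed.
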